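(* Let $A$ be a cardinal algebra in which every two elements have a meet, and let $\mu:A\to[0,\infty]$ be a map preserving countable sums (including $0$) and binary meets. Then $\mu$ preserves countable joins (which exist in $A$).
   Context: A cardinal algebra is a commutative monoid $(A,0,+)$ with a countable sum operation satisfying: (A) $\sum_i a_i=a_0+\sum_i a_{i+1}$; (B) $\sum_i(a_i+b_i)=\sum_ia_i+\sum_ib_i$; (C) if $a+b=\sum_ic_i$ there exist $a_i,b_i$ with $a=\sum a_i$, $b=\sum b_i$, $a_i+b_i=c_i$; (D) if $a_i=b_i+a_{i+1}$ for all $i$, there is $c$ with $a_i=c+\sum_jb_{i+j}$ for all $i$. Meets and joins refer to the canonical order $a\le b\iff\exists c\,(a+c=b)$; $[0,\infty]$ is a cardinal algebra with the usual sums and order. *)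

From HB Require Import structures.
From mathcomp Require Import all_boot all_order all_algebra.
From mathcomp Require Import all_classical all_reals.
From mathcomp Require Import ereal sequences.
Set Implicit Arguments. Unset Strict Implicit. Unset Printing Implicit Defensive.

Record cardinal_algebra := CardinalAlgebra {
  ca_car :> Type;
  ca_zero : ca_car;
  ca_add : ca_car -> ca_car -> ca_car;
  ca_sum : (nat -> ca_car) -> ca_car;
  ca_addA : forall a b c, ca_add a (ca_add b c) = ca_add (ca_add a b) c;
  ca_addC : forall a b, ca_add a b = ca_add b a;
  ca_add0 : forall a, ca_add ca_zero a = a;
  ca_axA : forall a : nat -> ca_car,
    ca_sum a = ca_add (a 0%N) (ca_sum (fun i => a i.+1));
  ca_axB : forall a b : nat -> ca_car,
    ca_sum (fun i => ca_add (a i) (b i)) = ca_add (ca_sum a) (ca_sum b);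
  ca_axC : forall (a b : ca_car) (c : nat -> ca_car),
    ca_add a b = ca_sum c ->
    exists (a' b' : nat -> ca_car),
      [/\ a = ca_sum a', b = ca_sum b' & forall i, ca_add (a' i) (b' i) = c i];
  ca_axD : forall a b : nat -> ca_car,
    (forall i, a i = ca_add (b i) (a i.+1)) ->
    exists c : ca_car, forall i, a i = ca_add c (ca_sum (fun j => b (i + j)%N))
}.

Section CAOrder.
Variable A : cardinal_algebra.

Definition ca_le (a b : A) : Prop := exists c, ca_add a c = b.

Definition is_meet (m a b : A) : Prop :=
  [/\ ca_le m a, ca_le m b & forall z, ca_le z a -> ca_le z b -> ca_le z m].

Definition is_lub_seq (j : A) (a : nat -> A) : Prop :=
  (forall i, ca_le (a i) j) /\ (forall z, (forall i, ca_le (a i) z) -> ca_le j z).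
End CAOrder.

(* If m_n is the meet of b_n and a_(n+1) and a_(n+1) = m_n + d_n, then
   b_(n+1) := b_n + d_n is the join of b_n and a_(n+1); this needs only the
   refinement property (C) and the weak cancellation law
   x + y = x + y' -> x + k = x /\ y + k = y' + k for some k, which follows from
   iterated refinement and (D).  With b_0 = a_0 the joins b_n increase to
   b_0 + sum_n d_n, which is therefore the join of the a_n.  Since mu
   preserves sums and meets, mu(b_(n+1)) = max(mu b_n, mu a_(n+1)) (if
   mu a_(n+1) < mu b_n, then mu d_n = 0), so mu(b_0 + sum_n d_n), the limit
   of the partial sums mu(b_n), is the supremum of the mu(a_n). *)

From HB Require Import structures.
From mathcomp Require Import all_boot all_order all_algebra.
From mathcomp Require Import all_classical all_reals.
From mathcomp Require Import ereal sequences.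
Import Order.TTheory GRing.Theory Num.Theory.
Set Implicit Arguments. Unset Strict Implicit. Unset Printing Implicit Defensive.

Lemma dependent_choice (T : Type) (P : T -> Prop) (rel : T -> T -> Prop) t0 :
  P t0 -> (forall t, P t -> exists2 t', P t' & rel t t') ->
  exists f : nat -> T, f 0 = t0 /\ forall n, P (f n) /\ rel (f n) (f n.+1).
Proof.
move=> Pt0 step.
have step' t : exists t', P t -> P t' /\ rel t t'.
  have [/step[t' Pt' tt']|nPt] := pselect (P t); first by exists t'.
  by exists t => /nPt.
have [g hg] := choice step'.
have Pg n : P (iter n g t0) by elim: n => //= n /hg[].
by exists (fun n => iter n g t0); split=> // n; split=> //; have [] := hg _ (Pg n).
Qed.

Section CardinalAlgebra.
Variable A : cardinal_algebra.
Implicit Types (x y z : A) (f g : nat -> A).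

HB.instance Definition _ := Monoid.isComLaw.Build A (ca_zero A) (@ca_add A)
  (@ca_addA A) (@ca_addC A) (@ca_add0 A).

Local Notation "x ⊕ y" := (ca_add x y) (at level 50, left associativity).

Definition ca_infty x := ca_sum (fun _ : nat => x).

Lemma ca_addx0 x : x ⊕ ca_zero A = x. Proof. by rewrite ca_addC ca_add0. Qed.

Lemma ca_addCA x y z : x ⊕ (y ⊕ z) = y ⊕ (x ⊕ z).
Proof. by rewrite !ca_addA (ca_addC x). Qed.

Lemma eq_ca_sum f g : f =1 g -> ca_sum f = ca_sum g.
Proof. by move=> /funext->. Qed.

Lemma ca_inftyE x : ca_infty x = x ⊕ ca_infty x.
Proof. exact: ca_axA. Qed.

Lemma ca_infty_addr x : ca_infty x ⊕ x = ca_infty x.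
Proof. by rewrite ca_addC -ca_inftyE. Qed.

Lemma ca_inftyD x y : ca_infty (x ⊕ y) = ca_infty x ⊕ ca_infty y.
Proof. exact: ca_axB. Qed.

Lemma ca_axD_const x g : (forall n, x = g n ⊕ x) -> exists c, x = c ⊕ ca_sum g.
Proof. by move=> /ca_axD[c /(_ 0)]; exists c. Qed.

Lemma ca_axD_infty x y : x = y ⊕ x -> exists c, x = c ⊕ ca_infty y.
Proof. by move=> xE; apply: ca_axD_const => _. Qed.

Lemma ca_sum0 : ca_sum (fun _ => ca_zero A) = ca_zero A.
Proof.
have [c cE] := ca_axD_infty (esym (ca_add0 (ca_zero A))).
have idem : ca_infty (ca_zero A) ⊕ ca_infty (ca_zero A) = ca_infty (ca_zero A).
  by rewrite -ca_inftyD ca_add0.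
change (ca_infty (ca_zero A) = ca_zero A); set z := ca_infty _ in cE idem *.
by rewrite -[LHS]ca_addx0 {1}cE ca_addCA idem -cE.
Qed.

Lemma ca_le_refl x : ca_le x x. Proof. by exists (ca_zero A); rewrite ca_addx0. Qed.

Lemma ca_le_trans y x z : ca_le x y -> ca_le y z -> ca_le x z.
Proof. by move=> [c <-] [c' <-]; exists (c ⊕ c'); rewrite ca_addA. Qed.

Lemma ca_le_addr x y : ca_le x (x ⊕ y). Proof. by exists y. Qed.

Lemma ca_le_addl x y : ca_le x (y ⊕ x). Proof. by exists y; rewrite ca_addC. Qed.

Lemma ca_le_anti x y : ca_le x y -> ca_le y x -> x = y.
Proof.
move=> [e xe] [f yf].
have /ca_axD_infty[c xE] : x = (e ⊕ f) ⊕ x by rewrite ca_addC ca_addA xe yf.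
rewrite -xe xE ca_inftyD -!ca_addA; congr (c ⊕ _).
by rewrite (ca_addC (ca_infty f)) ca_addA ca_infty_addr.
Qed.

Lemma ca_add_eq0 x y : x ⊕ y = ca_zero A -> x = ca_zero A.
Proof. by move=> xy0; apply: ca_le_anti; [exists y | exists x; rewrite ca_add0]. Qed.

Lemma ca_infty_idem x : ca_infty x ⊕ ca_infty x = ca_infty x.
Proof.
apply: ca_le_anti; last exact: ca_le_addr.
have /ca_axD_infty[c cE] : ca_infty x = (x ⊕ x) ⊕ ca_infty x.
  by rewrite -ca_addA -!ca_inftyE.
by exists c; rewrite ca_addC -ca_inftyD -cE.
Qed.

Lemma ca_absorb_infty x y : x ⊕ y = x -> x ⊕ ca_infty y = x.
Proof.
rewrite ca_addC => /esym/ca_axD_infty[c cE].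
by rewrite {1}cE -ca_addA ca_infty_idem -cE.
Qed.

Lemma ca_absorb_sum x g : (forall n, x ⊕ g n = x) -> x ⊕ ca_sum g = x.
Proof.
move=> xg; have /ca_axD_const[c cE] : forall n, x = ca_infty (g n) ⊕ x.
  by move=> n; rewrite ca_addC ca_absorb_infty.
rewrite {1}cE -ca_addA -ca_axB [in RHS]cE; congr (c ⊕ _).
by apply: eq_ca_sum => n; rewrite ca_infty_addr.
Qed.

Lemma ca_le_sum g n : ca_le (g n) (ca_sum g).
Proof.
elim: n g => [|n IH] g; rewrite (ca_axA g); first exact: ca_le_addr.
exact: ca_le_trans (IH _) (ca_le_addl _ _).
Qed.

Lemma ca_absorb_family x (k : nat -> A) : (forall n, x ⊕ k n = x) ->
  exists2 y, x ⊕ y = x & forall n, y ⊕ k n = y.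
Proof.
move=> xk; exists (ca_sum (fun n => ca_infty (k n))).
  by apply: ca_absorb_sum => n; apply: ca_absorb_infty.
move=> n; have [r <-] := ca_le_sum (fun n => ca_infty (k n)) n.
by rewrite -ca_addA (ca_addC r) ca_addA ca_infty_addr.
Qed.

Lemma ca_refine2 x y x' y' : x ⊕ y = x' ⊕ y' ->
  exists p q u v, [/\ x = p ⊕ q, y = u ⊕ v, x' = p ⊕ u & y' = q ⊕ v].
Proof.
move=> e.
pose c i := match i with 0 => x' | 1 => y' | _ => ca_zero A end.
have /ca_axC[a [b [xE yE abc]]] : x ⊕ y = ca_sum c.
  by rewrite e (ca_axA c) (ca_axA (fun i => c i.+1)) /c ca_sum0 ca_addx0.
have tail0 : ca_sum (fun i => a i.+2) ⊕ ca_sum (fun i => b i.+2) = ca_zero A.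
  by rewrite -ca_axB -ca_sum0; apply: eq_ca_sum => i; rewrite abc.
have [a0 b0] := (ca_add_eq0 tail0, ca_add_eq0 (etrans (ca_addC _ _) tail0)).
exists (a 0), (a 1), (b 0), (b 1); split; last 2 first.
- exact: (esym (abc 0)).
- exact: (esym (abc 1)).
- by rewrite xE (ca_axA a) (ca_axA (fun i => a i.+1)) a0 ca_addx0.
- by rewrite yE (ca_axA b) (ca_axA (fun i => b i.+1)) b0 ca_addx0.
Qed.

Lemma ca_refine_iter x y y' : x ⊕ y = x ⊕ y' ->
  exists p s r g : nat -> A, [/\ p 0 = x, s 0 = y, r 0 = y' &
    forall n, [/\ p n = s n.+1 ⊕ p n.+1, p n = r n.+1 ⊕ p n.+1,
                  s n = g n ⊕ s n.+1 & r n = g n ⊕ r n.+1]].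
Proof.
move=> e.
pose inv (t : A * A * A) := t.1.1 ⊕ t.1.2 = t.1.1 ⊕ t.2.
pose next (t t' : A * A * A) := exists d, [/\ t.1.1 = t'.1.2 ⊕ t'.1.1,
  t.1.1 = t'.2 ⊕ t'.1.1, t.1.2 = d ⊕ t'.1.2 & t.2 = d ⊕ t'.2].
have step t : inv t -> exists2 t', inv t' & next t t'.
  move: t => [[p s] r]; rewrite /inv /= => /ca_refine2[p' [r' [s' [d]]]].
  move=> [pE sE pE' rE]; exists (p', s', r'); first by rewrite /inv /= -pE' -pE.
  by exists d; split; rewrite /= ca_addC.
have [f [f0 hf]] := dependent_choice (e : inv (x, y, y')) step.
have [g hg] := choice (fun n => (hf n).2).
exists (fun n => (f n).1.1), (fun n => (f n).1.2), (fun n => (f n).2), g.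
by rewrite f0.
Qed.

Lemma ca_absorb_decreasing (p s : nat -> A) c :
  (forall n, p n = s n ⊕ p n.+1) -> (forall n, ca_le c (s n)) ->
  p 0 ⊕ ca_infty c = p 0.
Proof.
move=> /ca_axD[b /(_ 0) p0] /choice[t ct].
apply: ca_absorb_infty; rewrite p0.
have -> : ca_sum (fun j => s (0 + j)) = ca_infty c ⊕ ca_sum t.
  by rewrite -ca_axB; apply: eq_ca_sum => j; rewrite ct.
rewrite -!ca_addA; congr (b ⊕ _).
by rewrite (ca_addC (ca_sum t)) ca_addA ca_infty_addr.
Qed.

Lemma ca_weak_cancel x y y' : x ⊕ y = x ⊕ y' ->
  exists2 k, x ⊕ k = x & y ⊕ k = y' ⊕ k.
Proof.
move=> /ca_refine_iter[p [s [r [g [<- <- <- h]]]]].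
have [cs sE] : exists cs, forall n, s n = cs ⊕ ca_sum (fun j => g (n + j)).
  by apply: ca_axD => n; case: (h n).
have [cr rE] : exists cr, forall n, r n = cr ⊕ ca_sum (fun j => g (n + j)).
  by apply: ca_axD => n; case: (h n).
have ps : p 0 ⊕ ca_infty cs = p 0.
  apply: (@ca_absorb_decreasing _ (fun n => s n.+1)) => n; first by case: (h n).
  by rewrite sE; apply: ca_le_addr.
have pr : p 0 ⊕ ca_infty cr = p 0.
  apply: (@ca_absorb_decreasing _ (fun n => r n.+1)) => n; first by case: (h n).
  by rewrite rE; apply: ca_le_addr.
exists (ca_infty cs ⊕ ca_infty cr); first by rewrite ca_addA ps pr.
rewrite sE rE (ca_addC cs) (ca_addC cr) -!ca_addA; congr (_ ⊕ _).
rewrite ca_addA (ca_addC cs) ca_infty_addr.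
by rewrite [RHS]ca_addCA (ca_addC cr) ca_infty_addr.
Qed.

Lemma ca_chain_le_sum (a d : nat -> A) : (forall n, a n.+1 = a n ⊕ d n) ->
  forall n, ca_le (a n) (a 0 ⊕ ca_sum d).
Proof.
move=> ad n; elim: n a d ad => [|n IH] a d ad; first exact: ca_le_addr.
have := IH (fun i => a i.+1) (fun i => d i.+1) (fun i => ad i.+1).
by rewrite (ad 0) -ca_addA -(ca_axA d).
Qed.

Lemma ca_chain_sum_least (a d : nat -> A) z : (forall n, a n.+1 = a n ⊕ d n) ->
  (forall n, ca_le (a n) z) -> ca_le (a 0 ⊕ ca_sum d) z.
Proof.
move=> ad /choice[c ac].
have /choice[k kP] n : exists k, z ⊕ k = z /\ c n ⊕ k = d n ⊕ c n.+1 ⊕ k.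
  have : a n ⊕ c n = a n ⊕ (d n ⊕ c n.+1) by rewrite ca_addA -ad !ac.
  move=> /ca_weak_cancel[k ak ck]; exists k; split=> //.
  by rewrite -(ac n) -ca_addA (ca_addC (c n)) ca_addA ak.
have [K zK Kk] := ca_absorb_family (fun n => (kP n).1).
have cK n : c n ⊕ K = d n ⊕ (c n.+1 ⊕ K).
  rewrite -[in LHS](Kk n) (ca_addC K) ca_addA (kP n).2 -!ca_addA.
  by rewrite (ca_addC (k n)) Kk.
have [e /(_ 0) eE] := ca_axD cK.
by exists e; rewrite -[RHS]zK -(ac 0) -!ca_addA eE (ca_addC e).
Qed.

Lemma is_lub_chain_sum (a d : nat -> A) : (forall n, a n.+1 = a n ⊕ d n) ->
  is_lub_seq (a 0 ⊕ ca_sum d) a.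
Proof. by move=> ad; split=> [|z]; [exact: ca_chain_le_sum | exact: ca_chain_sum_least]. Qed.

Definition is_join (j x y : A) : Prop :=
  [/\ ca_le x j, ca_le y j & forall z, ca_le x z -> ca_le y z -> ca_le j z].

Lemma is_join_meet_complement m x y d : is_meet m x y -> y = m ⊕ d ->
  is_join (x ⊕ d) x y.
Proof.
move=> [[n mn] _ m_glb] yE; subst y; split; first exact: ca_le_addr.
  by exists n; rewrite -mn -!ca_addA (ca_addC d).
move=> z [e xe] [f yf].
have /ca_refine2[al [be [ga [de [xE eE yE fE]]]]] : x ⊕ e = m ⊕ d ⊕ f.
  by rewrite xe yf.
have [nu alnu] : ca_le al m.
  by apply: m_glb; [exists be; rewrite xE | exists ga; rewrite yE].
have /ca_weak_cancel[k alk gak] : al ⊕ ga = al ⊕ (nu ⊕ d).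
  by rewrite -yE ca_addA alnu.
exists (de ⊕ nu ⊕ k); rewrite -xe xE eE -[in RHS]alk.
rewrite [RHS](@ca_add A).[AC (3*2) ((1*3*5)*(4*2))] gak.
by rewrite [LHS](@ca_add A).[AC (3*3) ((1*2*4)*(5*3*6))].
Qed.

Lemma is_lub_partial_joins (a b : nat -> A) j : b 0 = a 0 ->
  (forall n, is_join (b n.+1) (b n) (a n.+1)) -> is_lub_seq j b -> is_lub_seq j a.
Proof.
move=> b0 bS [bj j_least]; split=> [n|z az].
  apply: ca_le_trans (bj n); case: n => [|n]; first by rewrite b0; apply: ca_le_refl.
  by have [] := bS n.
apply: j_least; elim=> [|n IH]; first by rewrite b0.
by have [_ _ b_least] := bS n; apply: b_least.
Qed.

Lemma partial_joins_exist (a : nat -> A) :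
  (forall x y, exists m, is_meet m x y) ->
  exists b d : nat -> A, [/\ b 0 = a 0, forall n, b n.+1 = b n ⊕ d n &
    forall n, exists2 m, is_meet m (b n) (a n.+1) & a n.+1 = m ⊕ d n].
Proof.
move=> meet.
have /choice[md mdP] (xy : A * A) : exists md : A * A,
    is_meet md.1 xy.1 xy.2 /\ xy.2 = md.1 ⊕ md.2.
  have [m mxy] := meet xy.1 xy.2; have [_ [d dE] _] := mxy.
  by exists (m, d); split=> //; rewrite /= dE.
pose fix b n := if n is n'.+1 then b n' ⊕ (md (b n', a n)).2 else a 0.
exists b, (fun n => (md (b n, a n.+1)).2); split=> // n.
by have [] := mdP (b n, a n.+1); exists (md (b n, a n.+1)).1.
Qed.

End CardinalAlgebra.

Local Open Scope classical_set_scope.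
Local Open Scope ereal_scope.

Section Valuation.
Variables (R : realType) (A : cardinal_algebra) (mu : A -> \bar R).
Hypotheses (mu_ge0 : forall a, 0 <= mu a)
  (mu_add : forall a b : A, mu (ca_add a b) = mu a + mu b)
  (mu_sum : forall a : nat -> A, mu (ca_sum a) = \sum_(0 <= i <oo) mu (a i))
  (mu_meet : forall a b m : A, is_meet m a b -> mu m = mine (mu a) (mu b)).

Lemma le_mu x y : ca_le x y -> mu x <= mu y.
Proof. by move=> [c <-]; rewrite mu_add leeDl. Qed.

Lemma mu_join_complement m x y d : is_meet m x y -> y = ca_add m d ->
  mu (ca_add x d) = maxe (mu x) (mu y).
Proof.
move=> mxy yE; have muy : mu y = mine (mu x) (mu y) + mu d.
  by rewrite -(mu_meet mxy) -mu_add -yE.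
rewrite mu_add; move: muy; have [_ ->|yx muy] // := leP (mu x) (mu y).
have fin_y : mu y \is a fin_num by rewrite ge0_fin_numE // (lt_le_trans yx) ?leey.
have d0 : mu d = 0 by rewrite -(addeK (mu d) fin_y) (addeC (mu d)) -muy subee.
by rewrite d0 adde0.
Qed.

Lemma mu_chain_le (b d : nat -> A) s : (forall n, b n.+1 = ca_add (b n) (d n)) ->
  (forall n, mu (b n) <= s) -> mu (ca_add (b 0%N) (ca_sum d)) <= s.
Proof.
move=> bd bs; pose e n := if n is n'.+1 then d n' else b 0%N.
have -> : ca_add (b 0%N) (ca_sum d) = ca_sum e by rewrite (ca_axA e).
rewrite mu_sum.
have partial n : \sum_(0 <= i < n.+1) mu (e i) = mu (b n).
  elim: n => [|n IH]; first by rewrite big_nat1.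
  by rewrite big_nat_recr //= IH bd mu_add.
apply: ereal_normedtype.lime_le; first exact: is_cvg_nneseries.
apply: nearW => -[|n]; last by rewrite partial.
by rewrite big_geq // (le_trans (mu_ge0 _) (bs 0%N)).
Qed.

End Valuation.

Theorem lemma4p9 (R : realType) (A : cardinal_algebra) (mu : A -> \bar R)
  (hmeet : forall a b : A, exists m : A, is_meet m a b)
  (mu_ge0 : forall a, 0 <= mu a)
  (mu0 : mu (ca_zero A) = 0)
  (mu_add : forall a b : A, mu (ca_add a b) = mu a + mu b)
  (mu_sum : forall a : nat -> A,
     mu (ca_sum a) = \sum_(0 <= i <oo) mu (a i))
  (mu_meet : forall a b m : A, is_meet m a b -> mu m = mine (mu a) (mu b)) :
  forall a : nat -> A,
    (exists j : A, is_lub_seq j a) /\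
    (forall j : A, is_lub_seq j a -> mu j = ereal_sup (range (fun i => mu (a i)))).
Proof.
move=> a; have [b [d [b0 bS bd]]] := partial_joins_exist a hmeet.
have b_join n : is_join (b n.+1) (b n) (a n.+1).
  by have [m mb ad] := bd n; rewrite bS; exact: is_join_meet_complement mb ad.
have a_lub := is_lub_partial_joins b0 b_join (is_lub_chain_sum bS).
split=> [|j [aj j_least]]; first by eexists; exact: a_lub.
have mu_mono := le_mu mu_ge0 mu_add.
set s := ereal_sup _; have a_le_s i : mu (a i) <= s by apply: ereal_sup_ubound; exists i.
have b_le_s n : mu (b n) <= s.
  elim: n => [|n IH]; first by rewrite b0.
  have [m mb ad] := bd n.
  by rewrite bS (mu_join_complement mu_ge0 mu_add mu_meet mb ad) ge_max IH a_le_s.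
apply/le_anti/andP; split.
  apply: le_trans (mu_mono _ _ (j_least _ a_lub.1)) _.
  by apply: (mu_chain_le mu_ge0 mu_add mu_sum bS) => n; apply: b_le_s.
by apply: ge_ereal_sup => _ [i _ <-]; exact: mu_mono (aj i).
Qed.
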